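(* If a system $C=(1,c_2,c_3,c_4,c_5,2c_5-c_3)$ is canonical and its subsystem $(1,c_2,c_3,c_4,c_5)$ is noncanonical, then $C$ is $(1,c_2,2c_2-1,c_4,c_2+c_4-1,2c_4-1)$ or $(1,c_2,2c_2,c_4,c_2+c_4,2c_4)$.
   Context: A system is a tuple $C=(c_1,\dots,c_n)$ of integers with $1=c_1<c_2<\dots<c_n$; for $k\le n$, $(c_1,\dots,c_k)$ is a subsystem. For a positive integer $v$, $\mathrm{opt}_C(v)$ is the minimum of $\sum_i x_i$ over $x\in\mathbb{Z}_{\ge0}^n$ with $\sum_i c_ix_i=v$. The greedy representation of $v$ is produced by: for $i=n$ down to $1$, while $c_i\le$ remaining value, take a coin $c_i$. $\mathrm{grd}_C(v)$ is its number of coins. A positive integer $w$ is a counterexample if $\mathrm{opt}_C(w)<\mathrm{grd}_C(w)$; $C$ is canonical if it has none, noncanonical otherwise. *)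

From mathcomp Require Import all_boot.
Set Implicit Arguments. Unset Strict Implicit. Unset Printing Implicit Defensive.

Definition is_system (c : seq nat) : Prop :=
  head 0 c = 1 /\ sorted ltn c.

(* The "while
   c_i <= remaining, take c_i" loop takes exactly (r %/ c_i) coins. *)
Fixpoint greedy_aux (cs_desc : seq nat) (r : nat) : nat :=
  match cs_desc with
  | [::] => 0
  | ci :: cs => r %/ ci + greedy_aux cs (r %% ci)
  end.

Definition grd (c : seq nat) (v : nat) : nat := greedy_aux (rev c) v.

Definition is_repr (c : seq nat) (v : nat) (x : seq nat) : Prop :=
  size x = size c /\ \sum_(i < size c) nth 0 c i * nth 0 x i = v.

(* opt_C(v) = min sum x_i over representations; opt_C(w) < grd_C(w)
   holds iff some representation uses fewer coins than greedy. *)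
Definition counterexample (c : seq nat) (w : nat) : Prop :=
  0 < w /\ exists x, is_repr c w x /\ sumn x < grd c w.

Definition canonical (c : seq nat) : Prop := forall w, ~ counterexample c w.
Definition noncanonical (c : seq nat) : Prop := exists w, counterexample c w.

From mathcomp Require Import all_boot zify.
From Stdlib Require Import Classical.
Set Implicit Arguments. Unset Strict Implicit. Unset Printing Implicit Defensive.

(* Let w be the least counterexample of C5 = (1, c2, c3, c4, c5) and e = 2 c5 - c3.
   All values below w are greedy-optimal, so an optimal representation of w
   avoids c5 and satisfies w < c5 + c_k for every coin c_k it uses: hence
   w < c4 + c5, and w is a multiple of c4 as soon as w >= c3 + c5. Greedy for
   C6 = (C5, e) agrees with greedy for C5 below e, so canonicity of C6 gives
   e <= w. Canonicity of C6 at c4 + c5 and at 2 c4 forces c4 + c5 - e, and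
   2 c4 - e or 2 c4 - c5, to be 0 or a coin of C5; every choice other than the
   two systems of the statement either breaks the order of the coins or puts
   the multiple w of c4 strictly between 2 c4 and 3 c4. *)

Lemma sumn_incr_nth s i : sumn (incr_nth s i) = (sumn s).+1.
Proof. by elim: s i => [|n s IH] [|i] //=; rewrite ?IH ?addnS // sumn_ncons. Qed.

Lemma system_coin_pos c k : is_system c -> k < size c -> 0 < nth 0 c k.
Proof.
case=> c1 srt; case: k => [|k] kc; first by rewrite nth0 c1.
have := sorted_ltn_nth ltn_trans 0 srt 0 k.+1 (ltn_trans (ltn0Sn k) kc) kc (ltn0Sn k).
by rewrite nth0 c1; apply: ltn_trans.
Qed.

Lemma grd0 c : grd c 0 = 0.
Proof. by rewrite /grd; elim: (rev c) => //= ci cs IH; rewrite div0n mod0n IH. Qed.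

Lemma grd_rcons c d v : grd (rcons c d) v = v %/ d + grd c (v %% d).
Proof. by rewrite /grd rev_rcons. Qed.

Lemma grd_rcons_small c d v : v < d -> grd (rcons c d) v = grd c v.
Proof. by move=> vd; rewrite grd_rcons divn_small // modn_small. Qed.

Lemma grd_rcons_sub c d v : 0 < d -> d <= v ->
  grd (rcons c d) v = (grd (rcons c d) (v - d)).+1.
Proof.
move=> d_gt0 dv; rewrite !grd_rcons -{1 2}(subnK dv) divnDr // divnn d_gt0.
by rewrite modnDr addn1.
Qed.

Lemma grd_rcons_between c e v : e <= v < e + e ->
  grd (rcons c e) v = (grd c (v - e)).+1.
Proof.
case/andP=> ev ve; rewrite grd_rcons_sub ?grd_rcons_small //; lia.
Qed.

Lemma greedy_aux_eq0 cs r : 1 \in cs -> greedy_aux cs r = 0 -> r = 0.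
Proof.
elim: cs r => //= ci cs IH r; rewrite inE => /predU1P [<-|one_cs].
  by rewrite divn1 => /eqP; rewrite addn_eq0 => /andP [/eqP].
move/eqP; rewrite addn_eq0 => /andP [/eqP q0 /eqP /(IH _ one_cs) r0].
by rewrite (divn_eq r ci) q0 r0.
Qed.

Lemma greedy_aux_le1_mem cs t : 1 \in cs -> 0 < t -> greedy_aux cs t <= 1 -> t \in cs.
Proof.
elim: cs t => //= ci cs IH t; rewrite !inE => one_cs t_gt0.
have mod_eq0 : greedy_aux cs (t %% ci) = 0 -> t %% ci = 0.
  by case/predU1P: one_cs => [<- _|/greedy_aux_eq0]; [rewrite modn1 | apply].
case: (t %/ ci) (divn_eq t ci) => [|[|//]] /= tE.
- case/predU1P: one_cs => [ci1|one_cs g]; first by move: tE t_gt0; rewrite -ci1 modn1 => ->.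
  by rewrite (IH t) ?orbT // {1}tE.
- rewrite add1n ltnS leqn0 => /eqP /mod_eq0 r0.
  by move: tE; rewrite r0 mul1n addn0 => ->; rewrite eqxx.
Qed.

Lemma grd_le1_mem c t : 1 \in c -> 0 < t -> grd c t <= 1 -> t \in c.
Proof. by rewrite -!(mem_rev c); apply: greedy_aux_le1_mem. Qed.

Lemma is_repr_incr c v x k : is_repr c v x -> k < size c ->
  is_repr c (v + nth 0 c k) (incr_nth x k).
Proof.
case=> sz <- kc; split; first by rewrite size_incr_nth sz kc.
under eq_bigr => i _ do rewrite nth_incr_nth mulnDr.
rewrite big_split /= addnC; congr (_ + _).
rewrite (bigD1 (Ordinal kc)) //= eqxx muln1 big1 ?addn0 // => i.
by rewrite -val_eqE /= eq_sym => /negbTE ->; rewrite muln0.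
Qed.

Lemma is_repr_rcons c d v x q : is_repr c v x ->
  is_repr (rcons c d) (v + d * q) (rcons x q).
Proof.
case=> sz <-; split; first by rewrite !size_rcons sz.
rewrite size_rcons big_ord_recr /= !nth_rcons sz ltnn eqxx; congr (_ + _).
by apply: eq_bigr => i _; rewrite !nth_rcons sz ltn_ord.
Qed.

Lemma grd_repr c v : head 0 c = 1 -> exists2 x, is_repr c v x & sumn x = grd c v.
Proof.
elim/last_ind: c v => [//|c d IH] v.
case: c IH => [_ d1|c0 c IH c01].
  rewrite /= in d1; exists [:: v]; last by rewrite /grd /= d1 divn1 addn0.
  by split=> //; rewrite big_ord_recl big_ord0 /= d1 mul1n addn0.
have [x rx sx] := IH (v %% d) c01.
exists (rcons x (v %/ d)).
  by rewrite {1}(divn_eq v d) addnC mulnC; apply: is_repr_rcons.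
by rewrite sumn_rcons grd_rcons sx addnC.
Qed.

Lemma is_repr_decr c v x k : is_repr c v x -> 0 < nth 0 x k ->
  exists y, [/\ is_repr c (v - nth 0 c k) y, nth 0 c k <= v & sumn x = (sumn y).+1].
Proof.
move=> [sz xv] xk.
have kx : k < size x by rewrite ltnNge; apply: contraTN xk => /(nth_default 0) ->.
set y := set_nth 0 x k (nth 0 x k).-1.
have sy : size y = size c by rewrite size_set_nth sz; apply/maxn_idPr; rewrite -sz.
have xE : x = incr_nth y k.
  apply: (@eq_from_nth _ 0) => [|i _]; first by rewrite size_incr_nth sy -sz kx.
  rewrite nth_incr_nth nth_set_nth /= eq_sym.
  by case: eqP => [->|_] //; rewrite add1n prednK.
have ry : is_repr c (\sum_(i < size c) nth 0 c i * nth 0 y i) y by [].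
have kc : k < size c by rewrite -sz.
have [_] := is_repr_incr ry kc; rewrite -xE xv => ->.
by exists y; rewrite addnK leq_addl {1}xE sumn_incr_nth.
Qed.

Lemma not_counterexample_grd_le c v x :
  ~ counterexample c v -> is_repr c v x -> grd c v <= sumn x.
Proof.
move=> not_cex rx; rewrite leqNgt; apply/negP => lt.
have [v0|v_gt0] := posnP v; first by rewrite v0 grd0 in lt.
by apply: not_cex; split=> //; exists x.
Qed.

Lemma canonical_grd_add_coins c i j : canonical c -> i < size c -> j < size c ->
  grd c (nth 0 c i + nth 0 c j) <= 2.
Proof.
move=> can ic jc.
have r0 : is_repr c 0 (nseq (size c) 0).
  by split; rewrite ?size_nseq // big1 // => k _; rewrite nth_nseq if_same muln0.
have := not_counterexample_grd_le (can _) (is_repr_incr (is_repr_incr r0 ic) jc).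
by rewrite !sumn_incr_nth sumn_nseq.
Qed.

Lemma counterexample_rcons c e w :
  counterexample c w -> w < e -> counterexample (rcons c e) w.
Proof.
case=> w_gt0 [x [rx lt]] we; split=> //; exists (rcons x 0); split.
  by have := is_repr_rcons e 0 rx; rewrite muln0 addn0.
by rewrite sumn_rcons addn0 grd_rcons_small.
Qed.

Definition min_counterexample c w :=
  counterexample c w /\ forall v, v < w -> ~ counterexample c v.

Lemma exists_min_counterexample c : noncanonical c -> exists w, min_counterexample c w.
Proof.
case=> w; elim/ltn_ind: w => w IH cex_w.
have [[v [vw cex_v]]|none] := classic (exists v, v < w /\ counterexample c v).
  exact: IH v vw cex_v.
by exists w; split=> // v vw cex_v; apply: none; exists v.
Qed.

Section MinimalCounterexample.

Variables (c : seq nat) (d w : nat) (x : seq nat).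
Hypothesis sys : is_system (rcons c d).
Hypothesis below_w : forall v, v < w -> ~ counterexample (rcons c d) v.
Hypothesis rx : is_repr (rcons c d) w x.
Hypothesis x_lt : sumn x < grd (rcons c d) w.

Let d_gt0 : 0 < d.
Proof.
have top : size c < size (rcons c d) by rewrite size_rcons.
by have := system_coin_pos sys top; rewrite nth_rcons ltnn eqxx.
Qed.

Lemma min_counterexample_top_unused : nth 0 x (size c) = 0.
Proof.
apply/eqP; rewrite -leqn0 leqNgt; apply/negP => x_top.
have [y [ry dw sx]] := is_repr_decr rx x_top.
rewrite nth_rcons ltnn eqxx in ry dw.
have := not_counterexample_grd_le (below_w (_ : w - d < w)) ry.
have := x_lt; rewrite (grd_rcons_sub _ d_gt0 dw) sx; lia.
Qed.

(* If d + c_k <= w, greedy on w - c_k starts with d, and adding c_k to the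
   greedy representation of w - c_k - d gives grd (w - d) <= grd (w - c_k);
   hence grd w <= sumn x. *)
Lemma min_counterexample_coin_bound k :
  0 < nth 0 x k -> w < d + nth 0 (rcons c d) k.
Proof.
move=> x_k; rewrite ltnNge; apply/negP => dck_w.
have kc : k < size (rcons c d).
  by case: rx => <- _; rewrite ltnNge; apply: contraTN x_k => /(nth_default 0) ->.
have [y [ry ck_w sx]] := is_repr_decr rx x_k.
set ck := nth 0 (rcons c d) k in ry ck_w dck_w.
have ck_gt0 : 0 < ck := system_coin_pos sys kc.
have grd_u := not_counterexample_grd_le (below_w (_ : w - ck < w)) ry.
rewrite grd_rcons_sub // in grd_u; last lia.
have [g rg sg] := grd_repr (w - ck - d) sys.1.
have := not_counterexample_grd_le (below_w (_ : w - ck - d + ck < w)) (is_repr_incr rg kc).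
rewrite sumn_incr_nth sg (_ : w - ck - d + ck = w - d); last lia.
have := x_lt; rewrite (grd_rcons_sub _ d_gt0 (_ : d <= w)); lia.
Qed.

End MinimalCounterexample.

Lemma min_counterexample5_bounds c2 c3 c4 c5 w :
  is_system [:: 1; c2; c3; c4; c5] -> min_counterexample [:: 1; c2; c3; c4; c5] w ->
  w < c5 + c4 /\ (c5 + c3 <= w -> c4 %| w).
Proof.
move=> sys [[w_gt0 [x [rx x_lt]]] below_w].
have top := min_counterexample_top_unused (c := [:: 1; c2; c3; c4]) sys below_w rx x_lt.
have bound k := min_counterexample_coin_bound (c := [:: 1; c2; c3; c4]) sys below_w rx x_lt (k := k).
case: rx x_lt top bound => sz wE _ top bound.
case: x sz wE top bound => [|x1 [|x2 [|x3 [|x4 [|x5 []]]]]] //= _ wE x5_0 bound.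
rewrite x5_0 !big_ord_recl big_ord0 /= in wE bound.
have unused k : c5 + nth 0 [:: 1; c2; c3; c4; c5] k <= w ->
    nth 0 [:: x1; x2; x3; x4; 0] k = 0.
  by rewrite leqNgt => /negP w_small; apply/eqP; rewrite -leqn0 leqNgt; apply/negP => /bound.
have /= u1 := unused 0; have /= u2 := unused 1; have /= u3 := unused 2; have /= u4 := unused 3.
case: sys => _ /=; rewrite !andbT => /and4P [lt12 lt23 lt34 lt45].
split.
  by rewrite ltnNge; apply/negP => big; move: wE; rewrite u1 ?u2 ?u3 ?u4; lia.
by move=> big; apply/dvdnP; exists x4; move: wE; rewrite u1 ?u2 ?u3; lia.
Qed.

Section DoubledTopCoin.

Variables c2 c3 c4 c5 w : nat.
Local Notation C5 := [:: 1; c2; c3; c4; c5].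
Local Notation e := (2 * c5 - c3).
Hypothesis sys : is_system (rcons C5 e).
Hypothesis can : canonical (rcons C5 e).
Hypothesis min_w : min_counterexample C5 w.

Lemma doubled_top_coins_lt : [/\ 1 < c2, c2 < c3, c3 < c4, c4 < c5 & c5 < e].
Proof. by case: sys => _ /=; rewrite !andbT => /and5P. Qed.

Let sys5 : is_system C5.
Proof.
by have [? ? ? ? ?] := doubled_top_coins_lt; split=> //=; rewrite !andbT; apply/and4P.
Qed.

Lemma doubled_top_le_min_counterexample : e <= w.
Proof. by rewrite leqNgt; apply/negP => /(counterexample_rcons min_w.1); apply: can. Qed.

Lemma coin_of_grd_le1 t : 0 < t -> t < c4 -> grd C5 t <= 1 -> [\/ t = 1, t = c2 | t = c3].
Proof.
have [_ _ _ lt45 _] := doubled_top_coins_lt.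
move=> t_gt0 t_lt /(grd_le1_mem _ t_gt0); rewrite !inE => /(_ isT).
rewrite (ltn_eqF t_lt) (ltn_eqF (ltn_trans t_lt lt45)) !orbF.
by case/or3P => /eqP ->; [constructor 1 | constructor 2 | constructor 3].
Qed.

Lemma doubled_top_le_2c4 : 2 * c3 <= c5 -> c5 <= 2 * c4 -> e <= 2 * c4.
Proof.
move=> c3_small c5_small; rewrite leqNgt; apply/negP => e_big.
have [w_lt w_dvd] := min_counterexample5_bounds sys5 min_w.
have e_w := doubled_top_le_min_counterexample.
have /dvdnP [k wk] : c4 %| w by apply: w_dvd; lia.
have c4_gt0 : 0 < c4 by have [] := doubled_top_coins_lt; lia.
have k_gt2 : 2 < k by rewrite -(ltn_pmul2r c4_gt0) -wk; lia.
have k_lt3 : k < 3 by rewrite -(ltn_pmul2r c4_gt0) -wk; lia.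
lia.
Qed.

Lemma doubled_top_gap : c5 + c2 = c3 + c4.
Proof.
have [lt12 lt23 lt34 lt45 lt5e] := doubled_top_coins_lt.
have [w_lt _] := min_counterexample5_bounds sys5 min_w.
have e_w := doubled_top_le_min_counterexample.
have : grd (rcons C5 e) (c4 + c5) <= 2 := canonical_grd_add_coins (i := 3) (j := 4) can isT isT.
rewrite grd_rcons_between ?ltnS; last lia.
case/coin_of_grd_le1; try lia.
by have := doubled_top_le_2c4; lia.
Qed.

Lemma doubled_top_c3_le : c3 <= 2 * c2.
Proof.
have [lt12 lt23 lt34 lt45 lt5e] := doubled_top_coins_lt.
have gap := doubled_top_gap.
rewrite leqNgt; apply/negP => c3_big.
have : grd (rcons C5 e) (c4 + c4) <= 2 := canonical_grd_add_coins (i := 3) (j := 3) can isT isT.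
have sub : grd C5 (c4 + c4) = (grd C5 (c4 + c4 - c5)).+1.
  by apply: (grd_rcons_sub [:: 1; c2; c3; c4]); lia.
rewrite grd_rcons_small ?sub ?ltnS; last lia.
case/coin_of_grd_le1; try lia.
by have := doubled_top_le_2c4; lia.
Qed.

Lemma doubled_top_c3 : c3 + 1 = 2 * c2 \/ c3 = 2 * c2.
Proof.
have [lt12 lt23 lt34 lt45 lt5e] := doubled_top_coins_lt.
have gap := doubled_top_gap.
have c3_le := doubled_top_c3_le.
have [c3_eq|c3_neq] := eqVneq c3 (2 * c2); first by right.
have : grd (rcons C5 e) (c4 + c4) <= 2 := canonical_grd_add_coins (i := 3) (j := 3) can isT isT.
rewrite grd_rcons_between ?ltnS; last lia.
case/coin_of_grd_le1; lia.
Qed.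

End DoubledTopCoin.

Theorem lemma8 (c2 c3 c4 c5 : nat) :
  is_system [:: 1; c2; c3; c4; c5; 2 * c5 - c3] ->
  canonical [:: 1; c2; c3; c4; c5; 2 * c5 - c3] ->
  noncanonical [:: 1; c2; c3; c4; c5] ->
  (c3 = 2 * c2 - 1 /\ c5 = c2 + c4 - 1 /\ 2 * c5 - c3 = 2 * c4 - 1) \/
  (c3 = 2 * c2 /\ c5 = c2 + c4 /\ 2 * c5 - c3 = 2 * c4).
Proof.
move=> sys can /exists_min_counterexample [w min_w].
have gap := doubled_top_gap sys can min_w.
by case: (doubled_top_c3 sys can min_w) => c3_eq; [left | right]; lia.
Qed.
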